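(* Let $A$ be a finite alphabet, $\mathbf{w}$ an infinite word over $A$ (not necessarily LSP) and $f$ a bLSP morphism on $A$, with $\alpha={\rm first}(f)$. Suppose a finite word $u$ is an $(a,b,c,\beta,\gamma)$-fragility of $f(\mathbf{w})$. (i) If $u=\varepsilon$, then $a={\rm first}(f)$ and $\beta b,\gamma c\in{\rm Fact}(f({\rm alph}(\mathbf{w})))$. (ii) If $u\neq\varepsilon$, then there exist letters $a',b',c'\in{\rm alph}(\mathbf{w})$ and an $(a',b',c',\beta,\gamma)$-fragility $v$ of $\mathbf{w}$ such that $|v|<|u|$, $f(v)$ is a proper prefix of $u$, and the words $ua$, $\beta ub$, $\gamma uc$ are respectively prefixes of $f(va')\alpha$, $\beta f(vb')\alpha$, $\gamma f(vc')\alpha$.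
   Context: A bLSP morphism on $A$ is an endomorphism $f$ of $A^*$ such that there is a letter $\alpha$ with $f(\alpha)=\alpha$ and, for every letter $\beta\neq\alpha$, there is a letter $\gamma$ with $f(\beta)=f(\gamma)\beta$; this $\alpha$ is unique and denoted ${\rm first}(f)$. For pairwise distinct letters $a,b,c$ and distinct letters $\beta\neq\gamma$, a finite word $u$ is an $(a,b,c,\beta,\gamma)$-fragility of an infinite word $\mathbf{x}$ if $ua$ is a prefix of $\mathbf{x}$ and $\beta ub$, $\gamma uc$ are factors of $\mathbf{x}$. ${\rm alph}(\mathbf{w})$ is the set of letters occurring in $\mathbf{w}$; for a set $X$ of words, ${\rm Fact}(X)$ is the set of factors of words of $X$; $\varepsilon$ is the empty word. *)

From mathcomp Require Import all_boot.
Set Implicit Arguments. Unset Strict Implicit. Unset Printing Implicit Defensive.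

Section Words.
Variable A : finType.

Definition fmorph (f : A -> seq A) (s : seq A) : seq A := flatten (map f s).

Definition pref (x : nat -> A) (n : nat) : seq A := mkseq x n.

(* Image of an infinite word under a (non-erasing) morphism:
   the i-th letter of f(w) is the i-th letter of f(w_0 ... w_i)
   (which has length > i when f is non-erasing, as bLSP morphisms are). *)
Definition fmorph_inf (f : A -> seq A) (w : nat -> A) : nat -> A :=
  fun i => nth (w 0) (fmorph f (pref w i.+1)) i.

Definition iprefix (p : seq A) (x : nat -> A) : Prop := p = pref x (size p).
Definition ifactor (p : seq A) (x : nat -> A) : Prop :=
  exists k, p = mkseq (fun i => x (k + i)) (size p).

Definition alph (w : nat -> A) (d : A) : Prop := exists i, w i = d.

Definition bLSP_first (f : A -> seq A) (alpha : A) : Prop :=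
  f alpha = [:: alpha] /\
  forall beta, beta <> alpha -> exists gamma, f beta = f gamma ++ [:: beta].

Definition fragility (x : nat -> A) (a b c beta gamma : A) (u : seq A) : Prop :=
  [/\ a <> b, a <> c, b <> c & beta <> gamma] /\
  [/\ iprefix (u ++ [:: a]) x,
       ifactor (beta :: u ++ [:: b]) x &
       ifactor (gamma :: u ++ [:: c]) x].

Definition in_Fact_img (f : A -> seq A) (w : nat -> A) (p : seq A) : Prop :=
  exists d, alph w d /\ infix p (f d).

End Words.

From mathcomp Require Import all_boot.
Set Implicit Arguments. Unset Strict Implicit. Unset Printing Implicit Defensive.

(* Every image f(d) of a bLSP morphism is a block α s ending with the letter d, in which
   α occurs only at the front.  Hence f is injective on letters and images of words
   factor uniquely into blocks at their occurrences of α, from the left as well as from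
   the right.  If u ≠ ε, cut u at its last α, u = p α s.  Desubstituting the prefix u a
   of f(w) yields p = f(v) followed by the block of the next letter a' of w; this block
   begins with α s and is followed by α, so α s a is a prefix of f(a') α.  An occurrence
   of β u b in f(w) desubstitutes in the same way to an occurrence of t v b' in w with
   f(t) ending in β, i.e. t = β.  Since a, b, c are read at the same position of
   f(a') α, f(b') α, f(c') α, the letters a', b', c' are distinct.  If u = ε, then a is
   the first letter α of f(w), and a factor β b with b ≠ α cannot straddle two blocks. *)

Section SeqFacts.
Variable T : eqType.
Implicit Types (x y e : T) (s p q r t X : seq T).

Lemma catsI s : injective (cat s).
Proof. by elim: s => //= x s IH y z [/IH]. Qed.

Lemma notin_cat_prefix x p r q t :
  x \notin p -> p ++ r = q ++ x :: t -> exists z, q = p ++ z.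
Proof.
elim: p q => [|y p IH] q; first by exists q.
rewrite inE negb_or => /andP[nxy np].
case: q => [|z q] /= [eyz]; first by rewrite eyz eqxx in nxy.
by move=> /(IH q np) [z' ->]; exists z'; rewrite eyz.
Qed.

Lemma notin_rcons_prefix x e p r q t :
  x \notin p -> p ++ e :: r = q ++ x :: t -> prefix (rcons p e) (rcons q x).
Proof.
move=> np E; have [z Eq] := notin_cat_prefix np E.
move: E; rewrite Eq -catA => /catsI.
case: z {Eq} => [|y z] /= [-> _]; first by rewrite cats0 prefix_refl.
by rewrite rcons_cat -cats1 prefix_catr //= !eqxx prefix0s.
Qed.

Lemma last_block_eq x X s X' s' :
  x \notin s -> x \notin s' -> X ++ x :: s = X' ++ x :: s' -> X = X' /\ s = s'.
Proof.
move=> ns ns'; elim: X X' => [|y X IH] [|y' X'] /=; first by case.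
- by case=> _ es; rewrite es mem_cat inE eqxx orbT in ns.
- by case=> _ es; rewrite -es mem_cat inE eqxx orbT in ns'.
by case=> -> /IH [-> ->].
Qed.

Lemma prefix_rcons_eq p x y t : prefix (rcons p x) t -> prefix (rcons p y) t -> x = y.
Proof. by move=> /prefixP[r1 ->] /prefixP[r2]; rewrite -!cats1 -!catA => /catsI [->]. Qed.

Lemma mem_split_last x u : x \in u -> exists p s, u = p ++ x :: s /\ x \notin s.
Proof.
elim: u => [|y u IH] //; rewrite inE.
have [/IH [p [s [-> ns]]] _ | nu] := boolP (x \in u); first by exists (y :: p), s.
by rewrite orbF => /eqP <-; exists [::], u.
Qed.

Lemma infix_pair_cat x y s t :
  infix [:: x; y] (s ++ t) -> [\/ infix [:: x; y] s, infix [:: x; y] t | prefix [:: y] t].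
Proof.
elim: s => [|z s IH]; first by move=> ?; apply: Or32.
rewrite cat_cons infix_consl => /orP [|/IH [H|H|H]]; last 3 first.
- by apply: Or31; rewrite infix_consl H orbT.
- exact: Or32.
- exact: Or33.
case: s {IH} => [|y' s]; rewrite prefix_cons => /andP[/eqP <-]; first by move=> ?; apply: Or33.
rewrite cat_cons prefix_cons => /andP[/eqP <- _]; apply/Or31/prefixW.
by rewrite !prefix_cons !eqxx prefix0s.
Qed.

End SeqFacts.

Section InfiniteWords.
Variables (A : finType) (x : nat -> A).

Lemma pref_add m n : pref x (m + n) = pref x m ++ mkseq (fun i => x (m + i)) n.
Proof. by rewrite /pref /mkseq iotaD map_cat add0n -{2}[m]addn0 iotaDl -map_comp. Qed.

Lemma ifactor_iprefix p : ifactor p x <-> exists q, iprefix (q ++ p) x.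
Proof.
split=> [[k Ep]|[q]].
  by exists (pref x k); rewrite /iprefix size_cat size_mkseq pref_add -Ep.
move/eqP; rewrite /iprefix size_cat pref_add eqseq_cat ?size_mkseq // => /andP[_ /eqP Ep].
by exists (size q).
Qed.

Lemma prefix_pref_iprefix p N : prefix p (pref x N) -> iprefix p x.
Proof.
move=> pp; have := size_prefix pp; rewrite size_mkseq => le_pN.
move: pp; rewrite prefixE -(subnKC le_pN) pref_add take_size_cat ?size_mkseq //.
by move=> /eqP Ep; rewrite /iprefix Ep.
Qed.

Lemma alph_pref d N : d \in pref x N -> alph x d.
Proof. by case/mapP => i _ ->; exists i. Qed.

End InfiniteWords.

Section Morphisms.
Variables (A : finType) (f : A -> seq A).

Lemma fmorph_cons d W : fmorph f (d :: W) = f d ++ fmorph f W.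
Proof. by []. Qed.

Lemma fmorph_cat V W : fmorph f (V ++ W) = fmorph f V ++ fmorph f W.
Proof. by rewrite /fmorph map_cat flatten_cat. Qed.

Lemma fmorph_rcons V d : fmorph f (rcons V d) = fmorph f V ++ f d.
Proof. by rewrite -cats1 fmorph_cat /fmorph /= cats0. Qed.

Lemma prefix_fmorph_rcons p e d y v :
  prefix (rcons p e) (rcons (f d) y) ->
  prefix (rcons (fmorph f v ++ p) e) (rcons (fmorph f (rcons v d)) y).
Proof. by rewrite fmorph_rcons !rcons_cat prefix_catr // eqxx. Qed.

Hypothesis f_nonerasing : forall d, f d != [::].

Lemma size_fmorph W : size W <= size (fmorph f W).
Proof.
elim: W => //= d W IH; rewrite fmorph_cons size_cat.
by rewrite -add1n leq_add // lt0n size_eq0.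
Qed.

Lemma pref_fmorph_inf w n : pref (fmorph_inf f w) n = take n (fmorph f (pref w n)).
Proof.
have le_n : n <= size (fmorph f (pref w n)).
  by apply: leq_trans (size_fmorph _); rewrite size_mkseq.
apply: (@eq_from_nth _ (w 0)) => [|i]; first by rewrite size_mkseq size_takel.
rewrite size_mkseq => lt_in; rewrite nth_mkseq // nth_take // /fmorph_inf.
have lt_i : i < size (fmorph f (pref w i.+1)).
  by apply: leq_trans (size_fmorph _); rewrite size_mkseq.
by rewrite -(subnKC lt_in) pref_add fmorph_cat nth_cat lt_i.
Qed.

Lemma iprefix_fmorph_inf w p :
  iprefix p (fmorph_inf f w) -> prefix p (fmorph f (pref w (size p))).
Proof. by rewrite /iprefix pref_fmorph_inf => {1}->; apply: prefix_take. Qed.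

End Morphisms.

Section BLSP.
Variables (A : finType) (f : A -> seq A) (alpha : A).
Hypothesis f_bLSP : bLSP_first f alpha.
Implicit Types (s v V W X R : seq A).

Lemma bLSP_image d : exists2 s, f d = alpha :: s & alpha \notin s.
Proof.
have [f_alpha f_other] := f_bLSP; have [n] := ubnP (size (f d)).
elim: n d => // n IH d lt_fd.
have [-> | /eqP nd] := eqVneq d alpha; first by exists [::]; rewrite ?f_alpha.
have [g fd] := f_other d nd; move: lt_fd; rewrite fd size_cat addn1 ltnS.
move=> /IH [s -> ns]; exists (s ++ [:: d]) => //.
by rewrite mem_cat mem_seq1 negb_or ns eq_sym; apply/eqP.
Qed.

Lemma last_bLSP_image y d : last y (f d) = d.
Proof.
have [f_alpha f_other] := f_bLSP.
have [-> | /eqP nd] := eqVneq d alpha; first by rewrite f_alpha.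
by have [g ->] := f_other d nd; rewrite cats1 last_rcons.
Qed.

Lemma bLSP_image_inj : injective f.
Proof. by move=> d e fde; rewrite -(last_bLSP_image alpha d) fde last_bLSP_image. Qed.

Lemma bLSP_nonerasing d : f d != [::].
Proof. by have [s ->] := bLSP_image d. Qed.

Lemma head_fmorph W : head alpha (fmorph f W) = alpha.
Proof. by case: W => [|d W] //; rewrite fmorph_cons; have [s ->] := bLSP_image d. Qed.

Lemma last_fmorph y W : last y (fmorph f W) = last y W.
Proof.
case/lastP: W => [|W d] //.
by rewrite fmorph_rcons last_cat last_bLSP_image last_rcons.
Qed.

Lemma fmorph_inf0 w : fmorph_inf f w 0 = alpha.
Proof. by rewrite /fmorph_inf /pref /mkseq /= fmorph_cons; have [s ->] := bLSP_image (w 0). Qed.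

Lemma fmorph_split W X Y : fmorph f W = X ++ alpha :: Y ->
  exists W1 W2, [/\ W = W1 ++ W2, fmorph f W1 = X & fmorph f W2 = alpha :: Y].
Proof.
elim: W X => [|d W IH] X; first by case: X.
rewrite fmorph_cons; have [s fd ns] := bLSP_image d.
case: X => [fdW | x X]; first by exists [::], (d :: W).
rewrite fd => -[<- E]; have [z EX] := notin_cat_prefix ns E.
move: E; rewrite EX -catA => /catsI /IH [W1 [W2 [-> fW1 fW2]]].
by exists (d :: W1), W2; rewrite fmorph_cons fd fW1.
Qed.

Lemma fmorph_decode W X s e R : alpha \notin s ->
  fmorph f W = X ++ alpha :: s ++ e :: R ->
  exists V d W', [/\ W = V ++ d :: W', fmorph f V = X &
                    prefix (rcons (alpha :: s) e) (rcons (f d) alpha)].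
Proof.
move=> ns /fmorph_split [V [[|d W'] [-> fV]]] //.
rewrite fmorph_cons; have [sd fd _] := bLSP_image d; rewrite fd => -[E].
exists V, d, W'; split => //; rewrite fd !rcons_cons prefix_cons eqxx.
have [t ft] : exists t, rcons (fmorph f W') alpha = alpha :: t.
  case: (fmorph f W') (head_fmorph W') => [|y t] /=; first by exists [::].
  by move=> ->; exists (rcons t alpha).
apply: (notin_rcons_prefix (r := rcons R alpha) (t := t) ns).
by rewrite -ft -rcons_cat E rcons_cat.
Qed.

Lemma fmorph_suffix V X v : fmorph f V = X ++ fmorph f v ->
  exists2 V0, V = V0 ++ v & fmorph f V0 = X.
Proof.
elim/last_ind: v V => [|v d IH] V; first by rewrite cats0 => fV; exists V; rewrite ?cats0.
have [s fd ns] := bLSP_image d; rewrite fmorph_rcons catA fd.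
case/lastP: V => [|V e]; first by case: (X ++ fmorph f v).
have [s' fe ns'] := bLSP_image e; rewrite fmorph_rcons fe.
move=> /(last_block_eq ns' ns) [/IH [V0 -> fV0] ess].
have -> : e = d by apply: bLSP_image_inj; rewrite fe fd ess.
by exists V0; rewrite ?rcons_cat.
Qed.

Lemma infix_pair_fmorph W x y : y != alpha ->
  infix [:: x; y] (fmorph f W) -> exists2 d, d \in W & infix [:: x; y] (f d).
Proof.
move=> ny; elim: W => [|d W IH] //; rewrite fmorph_cons.
case/infix_pair_cat => [H | /IH [e eW H] | H]; first by exists d; rewrite ?mem_head.
  by exists e; rewrite // inE eW orbT.
move: H ny; case: (fmorph f W) (head_fmorph W) => [|z t] //= ->.
by case/andP => ->.
Qed.

Lemma fmorph_inf_pair w x y : y != alpha ->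
  ifactor [:: x; y] (fmorph_inf f w) -> in_Fact_img f w [:: x; y].
Proof.
move=> ny /ifactor_iprefix [q /(iprefix_fmorph_inf bLSP_nonerasing) /prefixP [r Er]].
have : infix [:: x; y] (fmorph f (pref w (size (q ++ [:: x; y])))).
  by rewrite Er -catA infix_infix.
by case/(infix_pair_fmorph ny) => d /alph_pref dw pd; exists d.
Qed.

Lemma iprefix_desubst w P s a : alpha \notin s ->
  iprefix (P ++ alpha :: s ++ [:: a]) (fmorph_inf f w) ->
  exists v a', [/\ fmorph f v = P, alph w a', iprefix (v ++ [:: a']) w &
                   prefix (rcons (alpha :: s) a) (rcons (f a') alpha)].
Proof.
move=> ns /(iprefix_fmorph_inf bLSP_nonerasing); set N := size _.
move=> /prefixP [R]; rewrite -catA /= -catA.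
move=> /(fmorph_decode ns) [v [a' [W' [Ew fv pa]]]]; exists v, a'; split=> //.
  by apply: (alph_pref (N := N)); rewrite Ew mem_cat mem_head orbT.
by apply: (prefix_pref_iprefix (N := N)); apply/prefixP; exists W'; rewrite Ew -catA.
Qed.

Lemma ifactor_desubst w beta v s b : alpha \notin s ->
  ifactor (beta :: fmorph f v ++ alpha :: s ++ [:: b]) (fmorph_inf f w) ->
  exists b', [/\ alph w b', ifactor (beta :: v ++ [:: b']) w &
                 prefix (rcons (alpha :: s) b) (rcons (f b') alpha)].
Proof.
move=> ns /ifactor_iprefix [q /(iprefix_fmorph_inf bLSP_nonerasing)]; set N := size _.
move=> /prefixP [R E].
have [|V [b' [W' [Ew fV pb]]]] :=
  fmorph_decode (W := pref w N) (X := q ++ beta :: fmorph f v) (e := b) (R := R) ns.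
  by rewrite E -!catA /= -!catA /= -catA.
have [V1 EV fV1] : exists2 V1, V = V1 ++ v & fmorph f V1 = rcons q beta.
  by apply: fmorph_suffix; rewrite fV -cats1 -catA.
have [V0 EV1] : exists V0, V1 = rcons V0 beta.
  case/lastP: V1 {EV} fV1 => [|V0 t]; first by move/(congr1 size); rewrite size_rcons.
  by move=> /(congr1 (last alpha)); rewrite last_fmorph !last_rcons => ->; exists V0.
exists b'; split=> //.
  by apply: (alph_pref (N := N)); rewrite Ew mem_cat mem_head orbT.
apply/ifactor_iprefix; exists V0; apply: (prefix_pref_iprefix (N := N)).
by apply/prefixP; exists W'; rewrite Ew EV EV1 -cats1 -!catA /= -catA.
Qed.

End BLSP.

Theorem lemma4 (A : finType) (w : nat -> A) (f : A -> seq A) (alpha : A)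
  (a b c beta gamma : A) (u : seq A) :
  bLSP_first f alpha ->
  fragility (fmorph_inf f w) a b c beta gamma u ->
  (u = [::] ->
     a = alpha /\ in_Fact_img f w [:: beta; b] /\ in_Fact_img f w [:: gamma; c]) /\
  (u <> [::] ->
     exists a' b' c' v,
       [/\ alph w a', alph w b' & alph w c'] /\
       fragility w a' b' c' beta gamma v /\
       size v < size u /\
       (prefix (fmorph f v) u /\ size (fmorph f v) < size u) /\
       [/\ prefix (u ++ [:: a]) (fmorph f (rcons v a') ++ [:: alpha]),
           prefix (beta :: u ++ [:: b]) (beta :: fmorph f (rcons v b') ++ [:: alpha]) &
           prefix (gamma :: u ++ [:: c]) (gamma :: fmorph f (rcons v c') ++ [:: alpha])]).
Proof.
move=> f_bLSP [[nab nac nbc nbg] [Ha Hb Hc]].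
have head_alpha x p : iprefix (x :: p) (fmorph_inf f w) -> x = alpha.
  by rewrite /iprefix /= => -[-> _]; apply: fmorph_inf0.
split=> [u0 | nu].
  subst u; have a_alpha : a = alpha by apply: head_alpha Ha.
  by subst a; do !split; apply: (fmorph_inf_pair f_bLSP) => //; apply/eqP/nesym.
have [P [s [Eu ns]]] : exists P s, u = P ++ alpha :: s /\ alpha \notin s.
  apply: mem_split_last; move: nu Ha; case: (u) => [|x u'] // _ /head_alpha ->; exact: mem_head.
subst u; move: Ha Hb Hc; rewrite -!catA => Ha Hb Hc.
have [v [a' [fv aa' Hva pa]]] := iprefix_desubst f_bLSP ns Ha.
subst P; have [b' [bb' Hvb pb]] := ifactor_desubst f_bLSP ns Hb.
have [c' [cc' Hvc pc]] := ifactor_desubst f_bLSP ns Hc.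
have neq_letters x y d e : x <> y -> prefix (rcons (alpha :: s) x) (rcons (f d) alpha) ->
    prefix (rcons (alpha :: s) y) (rcons (f e) alpha) -> d <> e.
  by move=> nxy px py de; apply: nxy; rewrite de in px; apply: prefix_rcons_eq px py.
have lt_fv : size (fmorph f v) < size (fmorph f v ++ alpha :: s).
  by rewrite size_cat /= addnS ltnS leq_addr.
exists a', b', c', v; do !split=> //.
- exact: neq_letters _ _ _ _ nab pa pb.
- exact: neq_letters _ _ _ _ nac pa pc.
- exact: neq_letters _ _ _ _ nbc pb pc.
- exact: leq_ltn_trans (size_fmorph (bLSP_nonerasing f_bLSP) v) lt_fv.
- exact: prefix_prefix.
- by rewrite catA !cats1; apply: prefix_fmorph_rcons.
all: by rewrite prefix_cons eqxx catA !cats1; apply: prefix_fmorph_rcons.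
Qed.
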